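(* Consider the fixed-share algorithm with time-varying parameters, with $\eta_t\le\eta_{t-1}$ for all $t\ge1$. Then for all $t\ge1$, all loss sequences in $[0,1]^d$, and all $q_t\in\Delta_d$, \[ (\hat p_t-q_t)^\top\ell_t\le\sum_{i=1}^dq_{i,t}\Big(\frac1{\eta_{t-1}}\ln\frac1{\hat p_{i,t}}-\frac1{\eta_t}\ln\frac1{v_{i,t+1}}\Big)+\Big(\frac1{\eta_t}-\frac1{\eta_{t-1}}\Big)\ln d+\frac{\eta_{t-1}}8. \]
   Context: Let $d\ge1$ and $\Delta_d=\{q\in[0,1]^d:\sum_{i=1}^d q_i=1\}$. The fixed-share algorithm with time-varying parameters uses sequences $(\eta_t)_{t\ge1}$ of positive numbers and $(\alpha_t)_{t\ge1}$ in $(0,1]$, with the convention $\eta_0=\eta_1$. It sets $\hat p_1=(1/d,\dots,1/d)$; at each round $t\ge1$ it predicts $\hat p_t\in\Delta_d$, observes an arbitrary loss vector $\ell_t=(\ell_{1,t},\dots,\ell_{d,t})\in[0,1]^d$, suffers loss $\hat p_t^\top\ell_t$, and then sets, for $j=1,\dots,d$, $v_{j,t+1}=\hat p_{j,t}^{\,\eta_t/\eta_{t-1}}e^{-\eta_t\ell_{j,t}}\big/\sum_{i=1}^d\hat p_{i,t}^{\,\eta_t/\eta_{t-1}}e^{-\eta_t\ell_{i,t}}$ and $\hat p_{j,t+1}=\alpha_t/d+(1-\alpha_t)v_{j,t+1}$. *)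

From Stdlib Require Import Reals Lra.
Open Scope R_scope.

(* rsum d f = f 0 + ... + f (d-1)  (experts are indexed 0..d-1) *)
Fixpoint rsum (d : nat) (f : nat -> R) : R :=
  match d with
  | O => 0
  | S n => rsum n f + f n
  end.

(* Rounds are indexed t >= 1; eta 0 plays the role of eta_0 (= eta_1 by hypothesis). *)
Definition fs_w (eta : nat -> R) (loss : nat -> nat -> R) (p : nat -> R)
  (t j : nat) : R :=
  Rpower (p j) (eta t / eta (t - 1)%nat) * exp (- eta t * loss t j).

(* v_{j,t+1} computed from p = p_hat_t *)
Definition fs_vstep (d : nat) (eta : nat -> R) (loss : nat -> nat -> R)
  (p : nat -> R) (t j : nat) : R :=
  fs_w eta loss p t j / rsum d (fun i => fs_w eta loss p t i).

(* fs_p ... t = p_hat_t for t >= 1 (fs_p ... 0 is an unused dummy = uniform). *)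
Fixpoint fs_p (d : nat) (eta alpha : nat -> R) (loss : nat -> nat -> R)
  (t : nat) : nat -> R :=
  match t with
  | O => fun _ => / INR d
  | S t' =>
      match t' with
      | O => fun _ => / INR d
      | S _ =>
          let p := fs_p d eta alpha loss t' in
          fun j => alpha t' / INR d + (1 - alpha t') * fs_vstep d eta loss p t' j
      end
  end.

(* fs_v ... t j = v_{j,t+1} *)
Definition fs_v (d : nat) (eta alpha : nat -> R) (loss : nat -> nat -> R)
  (t j : nat) : R :=
  fs_vstep d eta loss (fs_p d eta alpha loss t) t j.

From Stdlib Require Import Reals Lra Lia.
From Coquelicot Require Import Coquelicot.
Open Scope R_scope.

(* One round of fixed share, seen as the exponentially weighted update of the
   current prediction p = p_hat_t with rates e = eta_t <= e1 = eta_{t-1}: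
   the weights w_j = p_j^(e/e1) exp(-e l_j) normalise to v_{t+1}.
   1. Taking logarithms, the right-hand side of the bound (without the
      ln d and eta/8 terms) equals  -ln(sum_j w_j)/e - q.l  exactly
      ([mixability_identity]); only the normaliser W = sum_j w_j matters.
   2. With g = e/e1 <= 1 we have w_j = (p_j exp(-e1 l_j))^g, so the
      power-mean inequality ([ln_sum_Rpower_le], from convexity of exp)
      gives  ln W <= g ln S + (1-g) ln d  with S = sum_j p_j exp(-e1 l_j).
   3. Hoeffding's lemma ([hoeffding_bernoulli], a calculus argument) bounds
      ln S <= -e1 p.l + e1^2/8 ([ln_mixture_exp_le]).
   Steps 1-3 give the one-round bound [exp_weight_step_bound] for any positive
   probability vector p; the theorem follows since every fixed-share
   prediction p_hat_t is such a vector ([fs_p_distribution]). *)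

Lemma rsum_ext d f g : (forall i, (i < d)%nat -> f i = g i) -> rsum d f = rsum d g.
Proof.
  induction d as [|d IH]; intros H; simpl; [reflexivity|].
  rewrite IH by (intros; apply H; lia). now rewrite (H d) by lia.
Qed.

Lemma rsum_le d f g : (forall i, (i < d)%nat -> f i <= g i) -> rsum d f <= rsum d g.
Proof.
  induction d as [|d IH]; intros H; simpl; [lra|].
  assert (f d <= g d) by (apply H; lia).
  assert (rsum d f <= rsum d g) by (apply IH; intros; apply H; lia).
  lra.
Qed.

Lemma rsum_plus d f g : rsum d (fun i => f i + g i) = rsum d f + rsum d g.
Proof. induction d as [|d IH]; simpl; [lra|]. rewrite IH. ring. Qed.

Lemma rsum_minus d f g : rsum d (fun i => f i - g i) = rsum d f - rsum d g.
Proof. induction d as [|d IH]; simpl; [lra|]. rewrite IH. ring. Qed.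

Lemma rsum_scal d c f : rsum d (fun i => c * f i) = c * rsum d f.
Proof. induction d as [|d IH]; simpl; [lra|]. rewrite IH. ring. Qed.

Lemma rsum_const d c : rsum d (fun _ => c) = INR d * c.
Proof. induction d as [|d IH]; simpl rsum; [simpl; lra|]. rewrite IH, S_INR. ring. Qed.

Lemma rsum_nonneg d f : (forall i, (i < d)%nat -> 0 <= f i) -> 0 <= rsum d f.
Proof.
  intros H. replace 0 with (rsum d (fun _ => 0)) by (rewrite rsum_const; ring).
  now apply rsum_le.
Qed.

Lemma rsum_pos d f : (1 <= d)%nat -> (forall i, (i < d)%nat -> 0 < f i) -> 0 < rsum d f.
Proof.
  destruct d as [|d]; [lia|]. intros _ H. simpl.
  assert (0 < f d) by (apply H; lia).
  assert (0 <= rsum d f) by (apply rsum_nonneg; intros; left; apply H; lia).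
  lra.
Qed.

(* A probability vector on {0,...,d-1} with positive entries, so that all
   the logarithms in the bound are defined. *)
Definition positive_distribution (d : nat) (p : nat -> R) : Prop :=
  (forall j, (j < d)%nat -> 0 < p j) /\ rsum d p = 1.

Lemma exp_convex g A B :
  0 <= g <= 1 -> exp (g * A + (1 - g) * B) <= g * exp A + (1 - g) * exp B.
Proof.
  intros Hg. set (m := g * A + (1 - g) * B).
  assert (EA : exp A = exp m * exp (A - m)) by (rewrite <- exp_plus; f_equal; ring).
  assert (EB : exp B = exp m * exp (B - m)) by (rewrite <- exp_plus; f_equal; ring).
  (* tangent line of exp at 0 *)
  pose proof (exp_ineq1_le (A - m)). pose proof (exp_ineq1_le (B - m)).
  pose proof (exp_pos m).
  assert (g * exp (A - m) + (1 - g) * exp (B - m) >= 1) by (unfold m in *; nra).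
  rewrite EA, EB. nra.
Qed.

Lemma derive_nonneg_le f f' a b :
  (forall x, is_derive f x (f' x)) ->
  (forall x, a <= x <= b -> 0 <= f' x) -> a <= b -> f a <= f b.
Proof.
  intros Df Hpos Hab.
  destruct (MVT_gen f a b f') as [c [Hc E]].
  - intros; apply Df.
  - intros x _. apply continuity_pt_filterlim.
    apply (ex_derive_continuous (K := R_AbsRing) (V := R_NormedModule)).
    eexists; apply Df.
  - rewrite Rmin_left, Rmax_right in Hc by lra.
    specialize (Hpos c Hc). nra.
Qed.

Lemma derive_sign_change_min f f' x0 x :
  (forall y, is_derive f y (f' y)) ->
  (forall y, y <= x0 -> f' y <= 0) -> (forall y, x0 <= y -> 0 <= f' y) ->
  f x0 <= f x.
Proof.
  intros Df Hneg Hpos. destruct (Rle_dec x0 x) as [Hx|Hx].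
  - apply (derive_nonneg_le f f'); auto. intros y Hy; apply Hpos; lra.
  - assert (Dopp : forall y, is_derive (fun z => - f z) y (- f' y))
      by (intros y; apply (is_derive_opp f), Df).
    assert (- f x <= - f x0); [|lra].
    apply (derive_nonneg_le _ _ x x0 Dopp); [|lra].
    intros y Hy. specialize (Hneg y ltac:(lra)). lra.
Qed.

Lemma bernoulli_mgf_pos m x : 0 <= m <= 1 -> 0 < 1 - m + m * exp x.
Proof.
  intros Hm. pose proof (exp_pos x).
  destruct (Req_dec m 0) as [->|Hm0]; [lra|].
  assert (0 < m * exp x) by (apply Rmult_lt_0_compat; lra). lra.
Qed.

(* Hoeffding's lemma for a Bernoulli(m) variable: the log moment generating
   function is at most s m + s^2/8. The difference f has f(0) = 0, and its
   derivative g is nondecreasing (g' is a square) with g(0) = 0. *)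
Lemma hoeffding_bernoulli m s :
  0 <= m <= 1 -> ln (1 - m + m * exp s) <= s * m + s * s / 8.
Proof.
  intros Hm.
  set (D := fun x => 1 - m + m * exp x).
  set (f := fun x => x * m + x * x / 8 - ln (D x)).
  set (g := fun x => m + x / 4 - m * exp x / D x).
  set (h := fun x => / 4 - m * (1 - m) * exp x / (D x * D x)).
  assert (HD : forall x, 0 < D x) by (intros; apply bernoulli_mgf_pos, Hm).
  assert (Df : forall x, is_derive f x (g x)).
  { intros x. specialize (HD x). unfold f, g, D in *. auto_derive; [lra|field; lra]. }
  assert (Dg : forall x, is_derive g x (h x)).
  { intros x. specialize (HD x). unfold g, h, D in *. auto_derive; [lra|field; lra]. }
  assert (Hh : forall x, 0 <= h x).
  { intros x. specialize (HD x).
    assert (E : h x = (1 - m - m * exp x) ^ 2 / 4 * / (D x * D x))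
      by (unfold h, D in *; field; lra).
    rewrite E. apply Rmult_le_pos.
    - pose proof (pow2_ge_0 (1 - m - m * exp x)). lra.
    - left. apply Rinv_0_lt_compat. nra. }
  assert (g0 : g 0 = 0) by (unfold g, D; cbv beta; rewrite exp_0; field; lra).
  assert (f0 : f 0 = 0).
  { unfold f, D; cbv beta. rewrite exp_0.
    replace (1 - m + m * 1) with 1 by ring. rewrite ln_1. lra. }
  assert (Hmin : f 0 <= f s).
  { apply (derive_sign_change_min f g); auto.
    - intros y Hy. rewrite <- g0. apply (derive_nonneg_le g h); auto.
    - intros y Hy. rewrite <- g0. apply (derive_nonneg_le g h); auto. }
  unfold f, D in *. lra.
Qed.

(* Hoeffding's lemma for a mixture: if p is a probability vector and the
   losses lie in [0,1], the log of sum_j p_j exp(s l_j) is at most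
   s (p.l) + s^2/8. Each exp(s l_j) is bounded by convexity on [0,1]. *)
Lemma ln_mixture_exp_le d p l s :
  (1 <= d)%nat -> positive_distribution d p ->
  (forall j, (j < d)%nat -> 0 <= l j <= 1) ->
  ln (rsum d (fun j => p j * exp (s * l j)))
  <= s * rsum d (fun j => p j * l j) + s * s / 8.
Proof.
  intros hd [Hp Hps] Hl.
  set (mu := rsum d (fun j => p j * l j)).
  assert (Hmu : 0 <= mu <= 1).
  { split.
    - apply rsum_nonneg. intros j Hj. specialize (Hp j Hj). specialize (Hl j Hj). nra.
    - rewrite <- Hps. apply rsum_le. intros j Hj.
      specialize (Hp j Hj). specialize (Hl j Hj). nra. }
  assert (Hmix : rsum d (fun j => p j * exp (s * l j)) <= 1 - mu + mu * exp s).
  { apply Rle_trans with (rsum d (fun j => p j * (l j * exp s + (1 - l j) * exp 0))).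
    - apply rsum_le. intros j Hj. apply Rmult_le_compat_l; [left; now apply Hp|].
      pose proof (exp_convex (l j) s 0 (Hl j Hj)) as C.
      now replace (l j * s + (1 - l j) * 0) with (s * l j) in C by ring.
    - rewrite exp_0. right.
      rewrite (rsum_ext d _ (fun j => p j - (1 - exp s) * (p j * l j))) by (intros; ring).
      rewrite rsum_minus, rsum_scal, Hps. unfold mu. ring. }
  eapply Rle_trans; [apply ln_le; [|exact Hmix]|].
  - apply rsum_pos; auto. intros j Hj.
    apply Rmult_lt_0_compat; [now apply Hp|apply exp_pos].
  - now apply hoeffding_bernoulli.
Qed.

(* Each term is
   exp of a convex combination of ln(x_j/X) and ln(1/d), shifted by M. *)
Lemma ln_sum_Rpower_le d x g :
  (1 <= d)%nat -> (forall j, (j < d)%nat -> 0 < x j) -> 0 <= g <= 1 ->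
  ln (rsum d (fun j => Rpower (x j) g))
  <= g * ln (rsum d x) + (1 - g) * ln (INR d).
Proof.
  intros hd Hx Hg.
  set (X := rsum d x).
  assert (HX : 0 < X) by (apply rsum_pos; auto).
  assert (Hd : 0 < INR d) by (apply lt_0_INR; lia).
  set (M := g * ln X + (1 - g) * ln (INR d)).
  rewrite <- (ln_exp M). apply ln_le.
  { apply rsum_pos; auto. intros; apply exp_pos. }
  apply Rle_trans with (rsum d (fun j => (g * (x j / X) + (1 - g) * / INR d) * exp M)).
  - apply rsum_le. intros j Hj. specialize (Hx j Hj).
    assert (E : Rpower (x j) g
                = exp (g * ln (x j / X) + (1 - g) * ln (/ INR d)) * exp M).
    { unfold Rpower, M. rewrite <- exp_plus. f_equal.
      rewrite ln_div, ln_Rinv by assumption. ring. }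
    rewrite E. apply Rmult_le_compat_r; [left; apply exp_pos|].
    rewrite <- (exp_ln (x j / X)) at 2 by (now apply Rdiv_lt_0_compat).
    rewrite <- (exp_ln (/ INR d)) at 2 by (now apply Rinv_0_lt_compat).
    now apply exp_convex.
  - rewrite (rsum_ext d _ (fun j => (g * / X * exp M) * x j + (1 - g) * / INR d * exp M))
      by (intros; field; lra).
    rewrite rsum_plus, rsum_scal, rsum_const. fold X. right. field. lra.
Qed.

Definition exp_weight (e e1 : R) (l p : nat -> R) (j : nat) : R :=
  Rpower (p j) (e / e1) * exp (- e * l j).

Lemma exp_weight_pos e e1 l p j : 0 < exp_weight e e1 l p j.
Proof. apply Rmult_lt_0_compat; [apply exp_pos|apply exp_pos]. Qed.

Lemma mixability_identity d e e1 l p q :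
  (1 <= d)%nat -> 0 < e -> 0 < e1 -> (forall j, (j < d)%nat -> 0 < p j) ->
  rsum d q = 1 ->
  rsum d (fun i => q i *
     (/ e1 * ln (1 / p i)
      - / e * ln (1 / (exp_weight e e1 l p i / rsum d (exp_weight e e1 l p)))))
  = - ln (rsum d (exp_weight e e1 l p)) / e - rsum d (fun i => q i * l i).
Proof.
  intros hd He He1 Hp Hq.
  set (W := rsum d (exp_weight e e1 l p)).
  assert (HW : 0 < W) by (apply rsum_pos; auto; intros; apply exp_weight_pos).
  rewrite (rsum_ext d _ (fun i => (- ln W / e) * q i - q i * l i)).
  { rewrite rsum_minus, rsum_scal, Hq. ring. }
  intros i Hi. specialize (Hp i Hi).
  assert (Hw : 0 < exp_weight e e1 l p i) by apply exp_weight_pos.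
  replace (1 / (exp_weight e e1 l p i / W)) with (W / exp_weight e e1 l p i)
    by (field; lra).
  rewrite Rdiv_1_l, ln_Rinv, ln_div by assumption.
  unfold exp_weight, Rpower. rewrite ln_mult, !ln_exp by apply exp_pos.
  field. lra.
Qed.

(* One round of the exponentially weighted update with rates e <= e1,
   for any positive probability vector p and any comparator q with total
   mass 1. *)
Lemma exp_weight_step_bound d e e1 l p q :
  (1 <= d)%nat -> 0 < e <= e1 -> positive_distribution d p ->
  (forall j, (j < d)%nat -> 0 <= l j <= 1) ->
  rsum d q = 1 ->
  rsum d (fun i => (p i - q i) * l i)
  <= rsum d (fun i => q i *
        (/ e1 * ln (1 / p i)
         - / e * ln (1 / (exp_weight e e1 l p i / rsum d (exp_weight e e1 l p)))))
     + (/ e - / e1) * ln (INR d) + e1 / 8.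
Proof.
  intros hd He Hpd Hl Hq. pose proof Hpd as [Hp _].
  rewrite mixability_identity by (auto; lra).
  set (g := e / e1).
  assert (Hg : 0 <= g <= 1).
  { unfold g. split; [apply Rlt_le, Rdiv_lt_0_compat; lra|].
    apply Rmult_le_reg_r with e1; [lra|]. field_simplify; lra. }
  (* power-mean step: the weights are (p_j exp(-e1 l_j))^g *)
  assert (HW : ln (rsum d (exp_weight e e1 l p))
               <= g * ln (rsum d (fun j => p j * exp (- e1 * l j)))
                  + (1 - g) * ln (INR d)).
  { rewrite (rsum_ext d _ (fun j => Rpower (p j * exp (- e1 * l j)) g)).
    - apply ln_sum_Rpower_le; auto. intros j Hj.
      apply Rmult_lt_0_compat; [now apply Hp|apply exp_pos].
    - intros j Hj. unfold exp_weight. fold g.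
      rewrite <- Rpower_mult_distr by (auto using exp_pos).
      f_equal. unfold Rpower. rewrite ln_exp. f_equal. unfold g. field. lra. }
  pose proof (ln_mixture_exp_le d p l (- e1) hd Hpd Hl) as HS.
  rewrite (rsum_ext d _ (fun i => p i * l i - q i * l i)) by (intros; ring).
  rewrite rsum_minus.
  set (lnW := ln (rsum d (exp_weight e e1 l p))) in *.
  set (lnS := ln (rsum d (fun j => p j * exp (- e1 * l j)))) in *.
  set (mu := rsum d (fun j => p j * l j)) in *.
  assert (HWe : lnW / e <= lnS / e1 + (/ e - / e1) * ln (INR d)).
  { apply Rmult_le_reg_r with e; [lra|].
    replace ((lnS / e1 + (/ e - / e1) * ln (INR d)) * e)
      with (g * lnS + (1 - g) * ln (INR d)) by (unfold g; field; lra).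
    field_simplify; lra. }
  assert (lnS / e1 <= - mu + e1 / 8).
  { apply Rmult_le_reg_r with e1; [lra|]. field_simplify; lra. }
  lra.
Qed.

Lemma fs_vstep_distribution d eta loss p t :
  (1 <= d)%nat -> positive_distribution d (fs_vstep d eta loss p t).
Proof.
  intros hd.
  assert (HW : 0 < rsum d (fs_w eta loss p t))
    by (apply rsum_pos; auto; intros; apply exp_weight_pos).
  split.
  - intros j _. apply Rdiv_lt_0_compat; [apply exp_weight_pos|exact HW].
  - change (rsum d (fs_vstep d eta loss p t))
      with (rsum d (fun j => fs_w eta loss p t j / rsum d (fs_w eta loss p t))).
    rewrite (rsum_ext d _ (fun j => / rsum d (fs_w eta loss p t) * fs_w eta loss p t j))
      by (intros; unfold Rdiv; ring).
    rewrite rsum_scal. field. lra.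
Qed.

Lemma fs_p_distribution d eta alpha loss t :
  (1 <= d)%nat -> (forall t, (1 <= t)%nat -> 0 < alpha t <= 1) -> (1 <= t)%nat ->
  positive_distribution d (fs_p d eta alpha loss t).
Proof.
  intros hd ha ht.
  assert (Hd : 0 < INR d) by (apply lt_0_INR; lia).
  induction t as [|[|t] IH]; [lia| |].
  - split; [intros; simpl; now apply Rinv_0_lt_compat|].
    simpl fs_p. rewrite rsum_const. field. lra.
  - destruct (fs_vstep_distribution d eta loss (fs_p d eta alpha loss (S t)) (S t) hd)
      as [Hv Hvs].
    specialize (ha (S t) ltac:(lia)).
    change (fs_p d eta alpha loss (S (S t))) with
      (fun j => alpha (S t) / INR d
              + (1 - alpha (S t)) * fs_vstep d eta loss (fs_p d eta alpha loss (S t)) (S t) j).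
    split.
    + intros j Hj. specialize (Hv j Hj).
      assert (0 < alpha (S t) / INR d) by (apply Rdiv_lt_0_compat; lra).
      assert (0 <= 1 - alpha (S t)) by lra.
      nra.
    + rewrite rsum_plus, rsum_const, rsum_scal, Hvs. field. lra.
Qed.

Theorem mainTheorem12
  (d : nat) (hd : (1 <= d)%nat)
  (eta alpha : nat -> R) (loss : nat -> nat -> R)
  (heta_pos : forall t, (1 <= t)%nat -> 0 < eta t)
  (heta0 : eta 0%nat = eta 1%nat)
  (halpha : forall t, (1 <= t)%nat -> 0 < alpha t <= 1)
  (heta_dec : forall t, (1 <= t)%nat -> eta t <= eta (t - 1)%nat)
  (hloss : forall t j, (1 <= t)%nat -> (j < d)%nat -> 0 <= loss t j <= 1)
  (t : nat) (ht : (1 <= t)%nat)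
  (q : nat -> R)
  (hq_nonneg : forall i, (i < d)%nat -> 0 <= q i)
  (hq_sum : rsum d q = 1) :
  rsum d (fun i => (fs_p d eta alpha loss t i - q i) * loss t i)
  <= rsum d (fun i => q i *
        (/ eta (t - 1)%nat * ln (1 / fs_p d eta alpha loss t i)
         - / eta t * ln (1 / fs_v d eta alpha loss t i)))
     + (/ eta t - / eta (t - 1)%nat) * ln (INR d)
     + eta (t - 1)%nat / 8.
Proof.
  (* v_{t+1} is exactly the normalised [exp_weight] with e = eta_t, e1 = eta_{t-1} *)
  apply exp_weight_step_bound.
  - exact hd.
  - split; [now apply heta_pos|now apply heta_dec].
  - now apply fs_p_distribution.
  - intros j Hj; now apply hloss.
  - exact hq_sum.
Qed.
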